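(* Let $q$ be an indeterminate, let $\mathcal W$ be the division algebra over $\mathbb{C}(q)$ generated by $U^{\pm1},V^{\pm1}$ subject to $VU=q^2UV$ (the fraction division algebra of this quantum torus), and let $f\in\mathbb{C}(q)(X)$ be a nonzero rational function such that the algebra homomorphism $\Psi:\mathcal W\to\mathcal W$ with $\Psi(U)=f(U)V$ and $\Psi(V)=U^{-1}$ is an isomorphism. Then $\Psi$ has period $5$ (i.e. $\Psi^5=\mathrm{id}$) if and only if $f(f(U)V)=V\,f(U^{-1}f(V^{-1}))\,U$ in $\mathcal W$.
   Context: For a rational function $f\in\mathbb{C}(q)(X)$ and an element $Y\in\mathcal W$, $f(Y)$ denotes the evaluation of $f$ at $Y$ in $\mathcal W$ (assumed well defined). *)

From HB Require Import structures.
From mathcomp Require Import all_boot all_order all_algebra.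
From mathcomp Require Import reals.
From mathcomp.real_closed Require Import complex.
Set Implicit Arguments. Unset Strict Implicit. Unset Printing Implicit Defensive.
Import Order.TTheory GRing.Theory Num.Theory.
Local Open Scope ring_scope.

Definition Cq (R : realType) : fieldType := {fraction {poly (R[i])}}.

Definition qind (R : realType) : Cq R := tofrac ('X : {poly R[i]}).

Definition peval (K : fieldType) (W : unitAlgType K) (p : {poly K}) (Y : W) : W :=
  (map_poly (in_alg W) p).[Y].

(* Evaluation of a rational function f = n/d in K(X) at Y in W:
   f(Y) := n(Y) * d(Y)^-1, computed on the stored representative (n,d) of f.
   When Y is transcendental over K (the case in which f(Y) is "well defined")
   this does not depend on the representative. *)
Definition feval (K : fieldType) (W : unitAlgType K) (f : {fraction {poly K}}) (Y : W) : W :=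
  peval (\n_(repr f)) Y * (peval (\d_(repr f)) Y)^-1.

Definition is_division_ring (T : unitRingType) : Prop :=
  forall x : T, x != 0 -> x \is a GRing.unit.

Definition div_generated (K : fieldType) (W : unitAlgType K) (U V : W) : Prop :=
  forall S : W -> Prop,
    (forall k : K, S (k%:A)) ->
    (forall x y, S x -> S y -> S (x + y)) ->
    (forall x, S x -> S (- x)) ->
    (forall x y, S x -> S y -> S (x * y)) ->
    (forall x, S x -> S (x^-1)) ->
    S U -> S V -> forall x, S x.

(* The monomials U^i V^j (i, j >= 0) are linearly independent over K, i.e. the
   quantum plane K<U,V>/(VU - q^2 UV) embeds in W (hence so does the quantum
   torus, after multiplying by U^n on the left and V^n on the right). *)
Definition monomials_free (K : fieldType) (W : unitAlgType K) (U V : W) : Prop :=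
  forall (n : nat) (c : 'I_n -> 'I_n -> K),
    \sum_(i < n) \sum_(j < n) c i j *: (U ^+ i * V ^+ j) = 0 ->
    forall i j, c i j = 0.

Definition quantum_torus_frac (R : realType) (W : unitAlgType (Cq R)) (U V : W) : Prop :=
  [/\ is_division_ring W,
      V * U = (qind R ^+ 2) *: (U * V),
      monomials_free U V
    & div_generated U V].

From HB Require Import structures.
From mathcomp Require Import all_boot all_order all_algebra.
From mathcomp Require Import reals.
From mathcomp.real_closed Require Import complex.
Set Implicit Arguments. Unset Strict Implicit. Unset Printing Implicit Defensive.
Import Order.TTheory GRing.Theory Num.Theory.
Local Open Scope ring_scope.

(* Write Y := V f(U^-1 f(V^-1)).  Directly from the definition of Psi,
   Psi^2(U) = f(f(U) V) U^-1 and Psi^3(Y) = U.  Hence the identity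
   f(f(U) V) = Y U says Psi^2(U) = Y, which by injectivity of Psi^3 is
   equivalent to Psi^5(U) = U; and Psi^5(U) = U forces Psi^5(V) = V because
   Psi(V) = U^-1.  An automorphism fixing the generators U, V of the division
   algebra is the identity. *)

Lemma numer_repr_neq0 (K : fieldType) (f : {fraction {poly K}}) :
  f != 0 -> \n_(repr f) != 0.
Proof.
apply: contra => /eqP n0; apply/eqP; rewrite -[f]reprK.
have -> : (\pi_({fraction {poly K}}) (repr f))%qT
          = (\pi_({fraction {poly K}}) (ratio0 _))%qT.
  by apply/eqmodP; rewrite /= FracField.equivfE n0 mul0r /= mulr0.
rewrite /GRing.zero /= /FracField.tofrac /= -?lock /=.
apply/eqmodP; rewrite /= FracField.equivfE /=.
by rewrite numer_Ratio ?oner_neq0 // mul0r mulr0.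
Qed.

Section Evaluation.
Variables (K : fieldType) (W : unitAlgType K).

Lemma peval_coef_sum (p : {poly K}) (Y : W) :
  peval p Y = \sum_(i < (size p).+1) p`_i *: Y ^+ i.
Proof.
rewrite /peval horner_coef size_map_poly [RHS]big_ord_recr /=.
rewrite nth_default // scale0r addr0.
by apply: eq_bigr => i _; rewrite coef_map /= mulr_algl.
Qed.

Lemma lrmorph_peval (Phi : {lrmorphism W -> W}) p Y :
  Phi (peval p Y) = peval p (Phi Y).
Proof.
rewrite /peval -horner_map -map_poly_comp; congr (_.[_]).
by apply: eq_map_poly => k /=; rewrite rmorph_alg.
Qed.

(* A bijective ring morphism preserves units, so it also commutes with the
   junk inverse x^-1 = x of a non-unit. *)
Lemma bij_rmorphV (Phi : {rmorphism W -> W}) :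
  bijective Phi -> forall x, Phi x^-1 = (Phi x)^-1.
Proof.
move=> [g PhiK gK] x.
have [xu | xNu] := boolP (x \is a GRing.unit); first by rewrite rmorphV.
rewrite (invr_out xNu) invr_out //; apply: contra xNu => /unitrP [y [yx xy]].
apply/unitrP; exists (g y).
by split; apply: (can_inj PhiK); rewrite rmorphM gK ?yx ?xy rmorph1.
Qed.

Lemma lrmorph_feval (Phi : {lrmorphism W -> W}) f Y :
  bijective Phi -> Phi (feval f Y) = feval f (Phi Y).
Proof.
by move=> Phi_bij; rewrite /feval rmorphM bij_rmorphV // -!(lrmorph_peval Phi).
Qed.

Variables U V : W.

Lemma div_generated_fixed (Phi : {lrmorphism W -> W}) :
  div_generated U V -> bijective Phi -> Phi U = U -> Phi V = V -> Phi =1 id.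
Proof.
move=> genUV Phi_bij PhiU PhiV; apply: genUV => //=.
- by move=> k; rewrite rmorph_alg.
- by move=> x y Phix Phiy; rewrite rmorphD; congr (_ + _).
- by move=> x Phix; rewrite rmorphN; congr (- _).
- by move=> x y Phix Phiy; rewrite rmorphM; congr (_ * _).
- by move=> x Phix; rewrite bij_rmorphV //; congr (_^-1).
Qed.

Hypothesis UV_free : monomials_free U V.

Lemma monomial_neq0 i j : U ^+ i * V ^+ j != 0.
Proof.
apply/eqP => UVij0.
pose c (a b : 'I_(i + j).+1) : K :=
  if (a == inord i) && (b == inord j) then 1 else 0.
have c_sum : \sum_(a < (i + j).+1) \sum_(b < (i + j).+1) c a b *: (U ^+ a * V ^+ b)
             = U ^+ i * V ^+ j.
  rewrite (bigD1 (inord i)) //= (bigD1 (inord j)) //=.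
  rewrite [X in _ + X = _]big1 => [|a ai]; last first.
    by rewrite big1 // => b _; rewrite /c (negbTE ai) scale0r.
  rewrite [X in _ + X + _]big1 => [|b bj]; last by rewrite /c (negbTE bj) andbF scale0r.
  by rewrite /c !eqxx scale1r !addr0 !inordK // ltnS ?leq_addl ?leq_addr.
have /UV_free/(_ (inord i) (inord j))/eqP := etrans c_sum UVij0.
by rewrite /c !eqxx oner_eq0.
Qed.

Lemma peval_neq0 (p : {poly K}) : p != 0 -> peval p U != 0.
Proof.
apply: contra => /eqP pU0.
pose c (a b : 'I_(size p).+1) := if b == ord0 then p`_a else 0.
have c_sum : \sum_(a < (size p).+1) \sum_(b < (size p).+1) c a b *: (U ^+ a * V ^+ b)
             = peval p U.
  rewrite peval_coef_sum; apply: eq_bigr => a _.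
  rewrite big_ord_recl /c eqxx expr0 mulr1 big1 ?addr0 // => b _.
  by rewrite eq_sym (negbTE (neq_lift _ _)) scale0r.
have /UV_free c0 := etrans c_sum pU0.
apply/eqP/polyP => a; rewrite coef0.
have [a_small | a_big] := ltnP a (size p).+1; last by rewrite nth_default // ltnW.
by have := c0 (Ordinal a_small) ord0; rewrite /c eqxx.
Qed.

Lemma feval_unit (f : {fraction {poly K}}) :
  is_division_ring W -> f != 0 -> feval f U \is a GRing.unit.
Proof.
move=> divW f_neq0; rewrite /feval unitrMr ?unitrV; apply/divW/peval_neq0.
- exact: denom_ratioP.
- exact: numer_repr_neq0.
Qed.

End Evaluation.

Section PeriodFive.
Variables (K : fieldType) (W : unitAlgType K) (U V : W).
Variables (f : {fraction {poly K}}) (Psi : {lrmorphism W -> W}).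
Hypothesis Psi_bij : bijective Psi.
Hypotheses (PsiU : Psi U = feval f U * V) (PsiV : Psi V = U^-1).
Hypotheses (Uu : U \is a GRing.unit) (Vu : V \is a GRing.unit).
Hypothesis fUu : feval f U \is a GRing.unit.

Let PsiM x y : Psi (x * y) = Psi x * Psi y := rmorphM Psi x y.
Let PsiVV : forall x, Psi x^-1 = (Psi x)^-1 := bij_rmorphV Psi_bij.
Let PsiF Y : Psi (feval f Y) = feval f (Psi Y) := lrmorph_feval f Y Psi_bij.

Lemma Psi2_U : Psi (Psi U) = feval f (feval f U * V) / U.
Proof. by rewrite PsiU PsiM PsiF PsiU PsiV. Qed.

Lemma Psi_invV : Psi V^-1 = U.
Proof. by rewrite PsiVV PsiV invrK. Qed.

Lemma Psi_invU : Psi U^-1 = V^-1 / feval f U.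
Proof. by rewrite PsiVV PsiU invrM. Qed.

Lemma Psi3_Y : Psi (Psi (Psi (V * feval f (U^-1 * feval f V^-1)))) = U.
Proof.
have PsiUf : Psi (U^-1 * feval f V^-1) = V^-1.
  by rewrite PsiM Psi_invU PsiF Psi_invV divrK.
by rewrite PsiM PsiV PsiF !PsiUf Psi_invV.
Qed.

Lemma Psi5_U_fixed_iff :
  Psi (Psi (Psi (Psi (Psi U)))) = U <->
  feval f (feval f U * V) = V * feval f (U^-1 * feval f V^-1) * U.
Proof.
have Psi_inj := bij_inj Psi_bij.
split => [Psi5U | fE]; last by rewrite Psi2_U fE mulrK // Psi3_Y.
rewrite -{2}Psi3_Y in Psi5U.
by move: Psi5U => /Psi_inj/Psi_inj/Psi_inj; rewrite Psi2_U => <-; rewrite divrK.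
Qed.

Lemma Psi5_V_fixed :
  Psi (Psi (Psi (Psi (Psi U)))) = U -> Psi (Psi (Psi (Psi (Psi V)))) = V.
Proof. by move=> Psi5U; apply: (bij_inj Psi_bij); rewrite PsiV !PsiVV Psi5U. Qed.

End PeriodFive.

Theorem lemma11 (R : realType) (W : unitAlgType (Cq R)) (U V : W)
    (HW : quantum_torus_frac U V)
    (f : {fraction {poly (Cq R)}}) (Hf : f != 0)
    (Psi : {lrmorphism W -> W}) (Hbij : bijective Psi)
    (HPsiU : Psi U = feval f U * V) (HPsiV : Psi V = U^-1) :
  (forall x : W, Psi (Psi (Psi (Psi (Psi x)))) = x) <->
  feval f (feval f U * V) = V * feval f (U^-1 * feval f (V^-1)) * U.
Proof.
case: HW => divW _ UV_free UV_gen.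
have Uu : U \is a GRing.unit.
  by apply/divW; have := monomial_neq0 UV_free 1 0; rewrite expr1 expr0 mulr1.
have Vu : V \is a GRing.unit.
  by apply/divW; have := monomial_neq0 UV_free 0 1; rewrite expr1 expr0 mul1r.
have fUu := feval_unit UV_free divW Hf.
rewrite -(Psi5_U_fixed_iff Hbij HPsiU HPsiV Uu Vu fUu).
split=> [Psi5_id | Psi5U]; first exact: Psi5_id.
have Psi5_bij : bijective (Psi \o Psi \o Psi \o Psi \o Psi).
  by do 4![apply: bij_comp => //].
apply: (div_generated_fixed UV_gen Psi5_bij) => //.
exact: Psi5_V_fixed HPsiV Psi5U.
Qed.
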